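(* Let $A\in\mathbb{C}^{m\times n}$ have rank $r$ and $B\in\mathbb{C}^{m\times n}$ have rank $s$, with singular value decompositions $$A=U\begin{pmatrix}\Sigma_{1}&0\\0&0\end{pmatrix}V^{\ast}=U_{1}\Sigma_{1}V_{1}^{\ast},\qquad B=\widetilde{U}\begin{pmatrix}\widetilde{\Sigma}_{1}&0\\0&0\end{pmatrix}\widetilde{V}^{\ast}=\widetilde{U}_{1}\widetilde{\Sigma}_{1}\widetilde{V}_{1}^{\ast},$$ where $U=(U_{1},U_{2})$ and $\widetilde{U}=(\widetilde{U}_{1},\widetilde{U}_{2})$ are $m\times m$ unitary, $V=(V_{1},V_{2})$ and $\widetilde{V}=(\widetilde{V}_{1},\widetilde{V}_{2})$ are $n\times n$ unitary, $U_{1}\in\mathbb{C}^{m\times r}$, $V_{1}\in\mathbb{C}^{n\times r}$, $\widetilde{U}_{1}\in\mathbb{C}^{m\times s}$, $\widetilde{V}_{1}\in\mathbb{C}^{n\times s}$, $\Sigma_{1}=\operatorname{diag}(\sigma_{1},\ldots,\sigma_{r})$ with $\sigma_{1}\geq\cdots\geq\sigma_{r}>0$, and $\widetilde{\Sigma}_{1}=\operatorname{diag}(\widetilde{\sigma}_{1},\ldots,\widetilde{\sigma}_{s})$ with $\widetilde{\sigma}_{1}\geq\cdots\geq\widetilde{\sigma}_{s}>0$. Let $E=B-A$. Then $$\|B^{\dagger}-A^{\dagger}\|_{F}^{2}\leq\|B^{\dagger}\|_{2}^{2}\|\widetilde{U}_{1}^{\ast}U_{2}\|_{F}^{2}+\|A^{\dagger}\|_{2}^{2}\|\widetilde{V}_{2}^{\ast}V_{1}\|_{F}^{2}+\|B^{\dagger}EA^{\dagger}\|_{F}^{2},$$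 $$\|B^{\dagger}-A^{\dagger}\|_{F}^{2}\leq\|A^{\dagger}\|_{2}^{2}\|\widetilde{U}_{2}^{\ast}U_{1}\|_{F}^{2}+\|B^{\dagger}\|_{2}^{2}\|\widetilde{V}_{1}^{\ast}V_{2}\|_{F}^{2}+\|A^{\dagger}EB^{\dagger}\|_{F}^{2},$$ and $$\|B^{\dagger}-A^{\dagger}\|_{F}^{2}\geq\frac{\|\widetilde{U}_{1}^{\ast}U_{2}\|_{F}^{2}}{\|B\|_{2}^{2}}+\frac{\|\widetilde{V}_{2}^{\ast}V_{1}\|_{F}^{2}}{\|A\|_{2}^{2}}+\|B^{\dagger}EA^{\dagger}\|_{F}^{2},$$ $$\|B^{\dagger}-A^{\dagger}\|_{F}^{2}\geq\frac{\|\widetilde{U}_{2}^{\ast}U_{1}\|_{F}^{2}}{\|A\|_{2}^{2}}+\frac{\|\widetilde{V}_{1}^{\ast}V_{2}\|_{F}^{2}}{\|B\|_{2}^{2}}+\|A^{\dagger}EB^{\dagger}\|_{F}^{2}.$$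
   Context: $M^{\dagger}$ denotes the Moore–Penrose inverse of $M$, $M^{\ast}$ the conjugate transpose, $\|\cdot\|_{2}$ the spectral norm and $\|\cdot\|_{F}$ the Frobenius norm. *)

From HB Require Import structures.
From mathcomp Require Import all_boot all_order all_algebra.
From mathcomp Require Import complex.
From mathcomp Require Import boolp classical_sets reals.
Set Implicit Arguments. Unset Strict Implicit. Unset Printing Implicit Defensive.
Import Order.TTheory GRing.Theory Num.Theory.
Local Open Scope ring_scope.

Section Defs.
Variable R : realType.
Local Notation C := R[i].

Definition ctrmx (m n : nat) (M : 'M[C]_(m, n)) : 'M[C]_(n, m) :=
  (map_mx conjc M)^T.

Definition cabs2 (z : C) : R := (complex.Re z) ^+ 2 + (complex.Im z) ^+ 2.

Definition frob (m n : nat) (M : 'M[C]_(m, n)) : R :=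
  Num.sqrt (\sum_(i < m) \sum_(j < n) cabs2 (M i j)).

(* spectral norm ||M||_2 = sup { ||M x||_2 : ||x||_2 <= 1 }
   (the Euclidean norm of a column vector is its Frobenius norm) *)
Definition specn (m n : nat) (M : 'M[C]_(m, n)) : R :=
  sup [set frob (M *m x) | x in [set x : 'cV[C]_n | frob x <= 1]].

Definition is_pinv (m n : nat) (M : 'M[C]_(m, n)) (X : 'M[C]_(n, m)) : Prop :=
  [/\ M *m X *m M = M, X *m M *m X = X,
      ctrmx (M *m X) = M *m X & ctrmx (X *m M) = X *m M].

Definition pinv (m n : nat) (M : 'M[C]_(m, n)) : 'M[C]_(n, m) :=
  xget 0 [set X | is_pinv M X].

Definition unitary (m k : nat) (U : 'M[C]_(m, k)) : Prop :=
  ctrmx U *m U = 1%:M /\ U *m ctrmx U = 1%:M.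

Definition svd (m n r : nat) (M : 'M[C]_(m, n))
  (U1 : 'M[C]_(m, r)) (U2 : 'M[C]_(m, m - r))
  (V1 : 'M[C]_(n, r)) (V2 : 'M[C]_(n, n - r)) (sigma : 'rV[R]_r) : Prop :=
  [/\ unitary (row_mx U1 U2), unitary (row_mx V1 V2),
      (forall i : 'I_r, 0 < sigma 0 i),
      (forall i j : 'I_r, (i <= j)%N -> sigma 0 j <= sigma 0 i) &
      M = U1 *m diag_mx (map_mx (fun x => (x%:C)%C) sigma) *m ctrmx V1].

End Defs.

From HB Require Import structures.
From mathcomp Require Import all_boot all_order all_algebra.
From mathcomp Require Import complex.
From mathcomp Require Import boolp classical_sets reals.
From mathcomp Require Import ring.
Import Order.TTheory GRing.Theory Num.Theory.
Local Open Scope ring_scope.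
Set Implicit Arguments. Unset Strict Implicit. Unset Printing Implicit Defensive.

(* With A^+ = V1 S^-1 U1^* and B^+ = Vt1 St^-1 Ut1^*, multiply B^+ - A^+ by
   the unitaries Vt^* on the left and U on the right, which preserves the
   Frobenius norm.  Of the four blocks, the (2,2) block vanishes, the
   off-diagonal ones are St^-1 Ut1^* U2 and -Vt2^* V1 S^-1, and the (1,1) block
   is -Vt1^* (B^+ E A^+) U1, whose norm is that of B^+ E A^+ because
   B^+ E A^+ = Vt1 (...) U1^*.  Hence
     |B^+ - A^+|_F^2 = |St^-1 Ut1^* U2|_F^2 + |Vt2^* V1 S^-1|_F^2
                       + |B^+ E A^+|_F^2,
   and the bounds follow from 1/|B|_2 <= 1/st_i <= |B^+|_2, since every
   singular value is attained by the spectral norm at its singular vector.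
   Exchanging A and B gives the other two inequalities. *)

Lemma mulmxA1 (K : pzSemiRingType) m p (P : 'M[K]_(m, p)) (Q : 'M[K]_(p, m)) :
  P *m Q = 1%:M -> forall q (M : 'M[K]_(m, q)), P *m (Q *m M) = M.
Proof. by move=> PQ q M; rewrite mulmxA PQ mul1mx. Qed.

Lemma mulmxA0 (K : pzSemiRingType) m p k (P : 'M[K]_(m, p)) (Q : 'M[K]_(p, k)) :
  P *m Q = 0 -> forall q (M : 'M[K]_(k, q)), P *m (Q *m M) = 0.
Proof. by move=> PQ q M; rewrite mulmxA PQ mul0mx. Qed.

Section PinvPerturbation.
Variable R : realType.
Local Notation C := R[i].

Lemma mul_conjc_cabs2 (z : C) : (z^* * z)%C = ((cabs2 z)%:C)%C.
Proof.
case: z => a b; rewrite /cabs2 /=; apply/eqP; rewrite eq_complex /=.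
by apply/andP; split; apply/eqP; ring.
Qed.

Lemma cabs2_ge0 (z : C) : 0 <= cabs2 z.
Proof. by rewrite addr_ge0 ?sqr_ge0. Qed.

Lemma cabs2_realM (x : R) (z : C) : cabs2 ((x%:C)%C * z) = x ^+ 2 * cabs2 z.
Proof. by case: z => a b; rewrite /cabs2 /=; ring. Qed.

Lemma cabs2_nat (b : bool) : cabs2 (b%:R : C) = b%:R.
Proof. by case: b; rewrite /cabs2 /= ?expr1n ?expr0n /= ?addr0. Qed.

Lemma ctrmxK m n (M : 'M[C]_(m, n)) : ctrmx (ctrmx M) = M.
Proof. by apply/matrixP=> i j; rewrite !mxE conjcK. Qed.

Lemma ctrmx_mul m n p (M : 'M[C]_(m, n)) (N : 'M[C]_(n, p)) :
  ctrmx (M *m N) = ctrmx N *m ctrmx M.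
Proof. by rewrite /ctrmx map_mxM trmx_mul. Qed.

Lemma ctrmxN m n (M : 'M[C]_(m, n)) : ctrmx (- M) = - ctrmx M.
Proof. by rewrite /ctrmx map_mxN linearN. Qed.

Lemma ctr_row_mx m n1 n2 (X : 'M[C]_(m, n1)) (Y : 'M[C]_(m, n2)) :
  ctrmx (row_mx X Y) = col_mx (ctrmx X) (ctrmx Y).
Proof. by rewrite /ctrmx map_row_mx tr_row_mx. Qed.

Lemma ctr_col_mx m1 m2 n (X : 'M[C]_(m1, n)) (Y : 'M[C]_(m2, n)) :
  ctrmx (col_mx X Y) = row_mx (ctrmx X) (ctrmx Y).
Proof. by rewrite /ctrmx map_col_mx tr_col_mx. Qed.

Lemma unitary_row_mx_blocks m p q (X : 'M[C]_(m, p)) (Y : 'M[C]_(m, q)) :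
  unitary (row_mx X Y) ->
  [/\ ctrmx X *m X = 1%:M, ctrmx X *m Y = 0, ctrmx Y *m X = 0
    & ctrmx Y *m Y = 1%:M].
Proof.
case=> + _; rewrite ctr_row_mx mul_col_row scalar_mx_block.
by case/eq_block_mx.
Qed.

Definition frob2 m n (M : 'M[C]_(m, n)) : R :=
  \sum_(i < m) \sum_(j < n) cabs2 (M i j).

Lemma frob2_ge0 m n (M : 'M[C]_(m, n)) : 0 <= frob2 M.
Proof. by do 2![apply: sumr_ge0 => ? _]; apply: cabs2_ge0. Qed.

Lemma frobE m n (M : 'M[C]_(m, n)) : frob M = Num.sqrt (frob2 M).
Proof. by []. Qed.

Lemma sqr_frob m n (M : 'M[C]_(m, n)) : frob M ^+ 2 = frob2 M.
Proof. by rewrite frobE sqr_sqrtr // frob2_ge0. Qed.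

Lemma frob2_trace m n (M : 'M[C]_(m, n)) :
  ((frob2 M)%:C)%C = \tr (ctrmx M *m M).
Proof.
rewrite /frob2 /mxtrace exchange_big rmorph_sum; apply: eq_bigr => j _.
rewrite rmorph_sum mxE; apply: eq_bigr => i _.
by rewrite !mxE mul_conjc_cabs2.
Qed.

Lemma frob2_ctrmx m n (M : 'M[C]_(m, n)) : frob2 (ctrmx M) = frob2 M.
Proof. by apply: (@complexI R); rewrite !frob2_trace ctrmxK mxtrace_mulC. Qed.

Lemma frob2_ctrmx_mulC p q k (X : 'M[C]_(p, q)) (Y : 'M[C]_(p, k)) :
  frob2 (ctrmx X *m Y) = frob2 (ctrmx Y *m X).
Proof. by rewrite -frob2_ctrmx ctrmx_mul ctrmxK. Qed.

Lemma frob2N m n (M : 'M[C]_(m, n)) : frob2 (- M) = frob2 M.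
Proof.
by apply: (@complexI R); rewrite !frob2_trace ctrmxN mulNmx mulmxN opprK.
Qed.

Lemma frob20 m n : frob2 (0 : 'M[C]_(m, n)) = 0.
Proof.
rewrite /frob2 big1 // => i _.
by rewrite big1 // => j _; rewrite mxE (cabs2_nat false).
Qed.

Lemma frob2_mulUl m n p (U : 'M[C]_(m, n)) (M : 'M[C]_(n, p)) :
  ctrmx U *m U = 1%:M -> frob2 (U *m M) = frob2 M.
Proof.
move=> UU; apply: (@complexI R).
by rewrite !frob2_trace ctrmx_mul -mulmxA mulmxA1.
Qed.

Lemma frob2_mulUr m n p (M : 'M[C]_(m, n)) (W : 'M[C]_(n, p)) :
  W *m ctrmx W = 1%:M -> frob2 (M *m W) = frob2 M.
Proof.
by move=> WW; rewrite -frob2_ctrmx ctrmx_mul frob2_mulUl ?frob2_ctrmx ?ctrmxK.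
Qed.

Lemma frob2_col_mx m1 m2 n (X : 'M[C]_(m1, n)) (Y : 'M[C]_(m2, n)) :
  frob2 (col_mx X Y) = frob2 X + frob2 Y.
Proof.
apply: (@complexI R).
by rewrite frob2_trace ctr_col_mx mul_row_col mxtraceD -!frob2_trace rmorphD.
Qed.

Lemma frob2_row_mx m n1 n2 (X : 'M[C]_(m, n1)) (Y : 'M[C]_(m, n2)) :
  frob2 (row_mx X Y) = frob2 X + frob2 Y.
Proof. by rewrite -frob2_ctrmx ctr_row_mx frob2_col_mx !frob2_ctrmx. Qed.

Definition cdiag k (d : 'rV[R]_k) : 'M[C]_k :=
  diag_mx (map_mx (fun x => (x%:C)%C) d).

Lemma ctrmx_cdiag k (d : 'rV[R]_k) : ctrmx (cdiag d) = cdiag d.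
Proof.
apply/matrixP => i j; rewrite !mxE.
by case: (eqVneq i j) => [->|_]; rewrite ?mulr1n ?conjc_real // !mulr0n conjc0.
Qed.

Lemma cdiag_mulV k (d : 'rV[R]_k) : (forall i, d 0 i != 0) ->
  cdiag d *m cdiag (map_mx GRing.inv d) = 1%:M
  /\ cdiag (map_mx GRing.inv d) *m cdiag d = 1%:M.
Proof.
move=> d_neq0; rewrite !mulmx_diag -!diag_const_mx.
by split; congr diag_mx; apply/rowP => j; rewrite !mxE -rmorphM ?mulfV ?mulVf.
Qed.

Lemma frob2_cdiag_mul k n (d : 'rV[R]_k) (X : 'M[C]_(k, n)) :
  frob2 (cdiag d *m X) = \sum_(i < k) d 0 i ^+ 2 * \sum_(j < n) cabs2 (X i j).
Proof.
rewrite /frob2 mul_diag_mx; apply: eq_bigr => i _; rewrite mulr_sumr.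
by apply: eq_bigr => j _; rewrite !mxE cabs2_realM.
Qed.

Lemma frob2_mul_cdiag k n (d : 'rV[R]_k) (X : 'M[C]_(n, k)) :
  frob2 (X *m cdiag d) = frob2 (cdiag d *m ctrmx X).
Proof. by rewrite -frob2_ctrmx ctrmx_mul ctrmx_cdiag. Qed.

Lemma frob2_cdiag_mul_le k n (d : 'rV[R]_k) (X : 'M[C]_(k, n)) c :
  (forall i, d 0 i ^+ 2 <= c) -> frob2 (cdiag d *m X) <= c * frob2 X.
Proof.
move=> dc; rewrite frob2_cdiag_mul /frob2 mulr_sumr; apply: ler_sum => i _.
by rewrite ler_wpM2r // sumr_ge0 // => j _; apply: cabs2_ge0.
Qed.

Lemma frob2_cdiag_mul_ge k n (d : 'rV[R]_k) (X : 'M[C]_(k, n)) c :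
  (forall i, c <= d 0 i ^+ 2) -> c * frob2 X <= frob2 (cdiag d *m X).
Proof.
move=> cd; rewrite frob2_cdiag_mul /frob2 mulr_sumr; apply: ler_sum => i _.
by rewrite ler_wpM2r // sumr_ge0 // => j _; apply: cabs2_ge0.
Qed.

Lemma frob2_cdiag_delta k (d : 'rV[R]_k) (i : 'I_k) :
  frob2 (cdiag d *m (delta_mx i 0 : 'cV[C]_k)) = d 0 i ^+ 2.
Proof.
rewrite frob2_cdiag_mul (bigD1 i) //= [X in _ + X]big1 ?addr0 => [|l /negPf li].
  by rewrite big_ord1 mxE !eqxx cabs2_nat mulr1.
by rewrite big_ord1 mxE li (cabs2_nat false) mulr0.
Qed.

Lemma frob2_delta k (i : 'I_k) : frob2 (delta_mx i 0 : 'cV[C]_k) = 1.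
Proof.
rewrite /frob2 (bigD1 i) //= [X in _ + X]big1 => [|l /negPf li].
  by rewrite big_ord1 mxE !eqxx cabs2_nat addr0.
by rewrite big_ord1 mxE li (cabs2_nat false).
Qed.

Lemma frob2_ctr_block_le b k q (Z1 : 'M[C]_(b, k)) (Z2 : 'M[C]_(b, q)) p
    (x : 'M[C]_(b, p)) :
  unitary (row_mx Z1 Z2) -> frob2 (ctrmx Z1 *m x) <= frob2 x.
Proof.
case=> _ ZZ; rewrite -[leRHS](@frob2_mulUl _ _ _ (ctrmx (row_mx Z1 Z2))).
  by rewrite ctr_row_mx mul_col_mx frob2_col_mx lerDl frob2_ge0.
by rewrite ctrmxK.
Qed.

Lemma le_specn_factor a b k q (W : 'M[C]_(a, k)) (d : 'rV[R]_k)
    (Z1 : 'M[C]_(b, k)) (Z2 : 'M[C]_(b, q)) :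
  ctrmx W *m W = 1%:M -> unitary (row_mx Z1 Z2) -> (forall i, 0 <= d 0 i) ->
  forall i, d 0 i <= specn (W *m cdiag d *m ctrmx Z1).
Proof.
move=> WW Zunit d_ge0 i; have [Z1Z1 _ _ _] := unitary_row_mx_blocks Zunit.
(* [c] bounds the image set, so its [sup] is an upper bound for each value. *)
pose c := \sum_(l < k) d 0 l.
have c_ge0 : 0 <= c by apply: sumr_ge0.
have dc l : d 0 l ^+ 2 <= c ^+ 2.
  by rewrite ler_sqr ?nnegrE // /c (bigD1 l) //= lerDl sumr_ge0.
apply: ub_le_sup.
  exists c => _ [x /= x_le1 <-].
  rewrite -ler_sqr ?nnegrE ?sqrtr_ge0 // sqr_frob -!mulmxA frob2_mulUl //.
  apply: le_trans (frob2_cdiag_mul_le _ dc) _; rewrite ler_piMr ?exprn_ge0 //.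
  rewrite (le_trans (frob2_ctr_block_le _ Zunit)) //.
  by rewrite -sqr_frob expr_le1 ?sqrtr_ge0.
pose e : 'cV[C]_k := delta_mx i 0.
have e_le1 : frob (Z1 *m e) <= 1.
  by rewrite frobE frob2_mulUl // frob2_delta sqrtr1.
exists (Z1 *m e) => //.
rewrite frobE -!mulmxA (mulmxA1 Z1Z1) frob2_mulUl // frob2_cdiag_delta.
by rewrite sqrtr_sqr ger0_norm.
Qed.

Lemma is_pinv_unique m n (M : 'M[C]_(m, n)) X Y :
  is_pinv M X -> is_pinv M Y -> X = Y.
Proof.
case=> MXM XMX MX_herm XM_herm [MYM YMY MY_herm YM_herm].
have XE : X = X *m M *m Y.
  have MXE : M *m X = ctrmx X *m ctrmx M by rewrite -ctrmx_mul MX_herm.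
  have McE : ctrmx M = ctrmx M *m (M *m Y) by rewrite -{1}MYM ctrmx_mul MY_herm.
  rewrite -{1}XMX -mulmxA MXE McE (mulmxA (ctrmx X)) -ctrmx_mul MX_herm.
  by rewrite !mulmxA XMX.
have YE : Y = X *m M *m Y.
  have YME : Y *m M = ctrmx M *m ctrmx Y by rewrite -ctrmx_mul YM_herm.
  have McE : ctrmx M = X *m M *m ctrmx M.
    by rewrite -{1}MXM -mulmxA ctrmx_mul XM_herm.
  rewrite -{1}YMY YME McE -(mulmxA (X *m M)) -ctrmx_mul YM_herm.
  by rewrite -(mulmxA (X *m M)) YMY.
by rewrite XE -YE.
Qed.

Lemma pinvE m n (M : 'M[C]_(m, n)) X : is_pinv M X -> pinv M = X.
Proof. by move=> MX; apply: (is_pinv_unique _ MX); apply: (xgetI 0 MX). Qed.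

Section SVD.
Variables (m n r : nat) (M : 'M[C]_(m, n)).
Variables (U1 : 'M[C]_(m, r)) (U2 : 'M[C]_(m, m - r)).
Variables (V1 : 'M[C]_(n, r)) (V2 : 'M[C]_(n, n - r)) (sigma : 'rV[R]_r).
Hypothesis svdM : svd M U1 U2 V1 V2 sigma.

Lemma svd_cdiag_mulV :
  cdiag sigma *m cdiag (map_mx GRing.inv sigma) = 1%:M
  /\ cdiag (map_mx GRing.inv sigma) *m cdiag sigma = 1%:M.
Proof.
by case: svdM => _ _ sigma_gt0 _ _; apply: cdiag_mulV => i; rewrite lt0r_neq0.
Qed.

Lemma pinv_svd : pinv M = V1 *m cdiag (map_mx GRing.inv sigma) *m ctrmx U1.
Proof.
have [SSi SiS] := svd_cdiag_mulV.
case: svdM => /unitary_row_mx_blocks[U1U _ _ _] /unitary_row_mx_blocks[V1V _ _ _].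
move=> _ _ ->; rewrite -/(cdiag sigma).
set S := cdiag sigma; set Si := cdiag (map_mx GRing.inv sigma).
have MX : U1 *m S *m ctrmx V1 *m (V1 *m Si *m ctrmx U1) = U1 *m ctrmx U1.
  by rewrite -!mulmxA (mulmxA1 V1V) (mulmxA1 SSi).
have XM : V1 *m Si *m ctrmx U1 *m (U1 *m S *m ctrmx V1) = V1 *m ctrmx V1.
  by rewrite -!mulmxA (mulmxA1 U1U) (mulmxA1 SiS).
apply: pinvE; split.
- by rewrite MX -!mulmxA (mulmxA1 U1U).
- by rewrite XM -!mulmxA (mulmxA1 V1V).
- by rewrite MX ctrmx_mul ctrmxK.
- by rewrite XM ctrmx_mul ctrmxK.
Qed.

Lemma svd_le_specn i : sigma 0 i <= specn M.
Proof.
case: (svdM) => /unitary_row_mx_blocks[U1U _ _ _] Vunit sigma_gt0 _ ->.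
by apply: (le_specn_factor U1U Vunit) => j; apply/ltW.
Qed.

Lemma svd_inv_le_specn_pinv i : (sigma 0 i)^-1 <= specn (pinv M).
Proof.
case: (svdM) => Uunit /unitary_row_mx_blocks[V1V _ _ _] sigma_gt0 _ _.
have := @le_specn_factor _ _ _ _ V1 (map_mx GRing.inv sigma) _ _ V1V Uunit _ i.
by rewrite pinv_svd mxE; apply=> j; rewrite mxE invr_ge0 ltW.
Qed.

Lemma frob2_svd_inv_mul_le p (X : 'M[C]_(r, p)) :
  frob2 (cdiag (map_mx GRing.inv sigma) *m X) <= specn (pinv M) ^+ 2 * frob2 X.
Proof.
case: (svdM) => _ _ sigma_gt0 _ _.
apply: frob2_cdiag_mul_le => i.
rewrite mxE ler_sqr ?nnegrE ?svd_inv_le_specn_pinv //.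
  by rewrite invr_ge0 ltW.
by rewrite (le_trans _ (svd_inv_le_specn_pinv i)) // invr_ge0 ltW.
Qed.

Lemma frob2_svd_inv_mul_ge p (X : 'M[C]_(r, p)) :
  frob2 X / specn M ^+ 2 <= frob2 (cdiag (map_mx GRing.inv sigma) *m X).
Proof.
case: (svdM) => _ _ sigma_gt0 _ _.
rewrite mulrC; apply: frob2_cdiag_mul_ge => i; rewrite mxE exprVn.
have specn_gt0 := lt_le_trans (sigma_gt0 i) (svd_le_specn i).
rewrite lef_pV2 ?posrE ?exprn_gt0 //.
rewrite ler_sqr ?nnegrE ?(ltW specn_gt0) ?(ltW (sigma_gt0 i)) //.
exact: svd_le_specn.
Qed.

End SVD.

Section TwoSVD.
Variables (m n r s : nat) (A B : 'M[C]_(m, n)).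
Variables (U1 : 'M[C]_(m, r)) (U2 : 'M[C]_(m, m - r)).
Variables (V1 : 'M[C]_(n, r)) (V2 : 'M[C]_(n, n - r)) (sigma : 'rV[R]_r).
Variables (Ut1 : 'M[C]_(m, s)) (Ut2 : 'M[C]_(m, m - s)).
Variables (Vt1 : 'M[C]_(n, s)) (Vt2 : 'M[C]_(n, n - s)) (sigmat : 'rV[R]_s).
Hypothesis svdA : svd A U1 U2 V1 V2 sigma.
Hypothesis svdB : svd B Ut1 Ut2 Vt1 Vt2 sigmat.

Local Notation Si := (cdiag (map_mx GRing.inv sigma)).
Local Notation Sti := (cdiag (map_mx GRing.inv sigmat)).

Lemma pinv_mul_sub_mul_pinv :
  pinv B *m (B - A) *m pinv A
  = Vt1 *m (ctrmx Vt1 *m V1 *m Si - Sti *m (ctrmx Ut1 *m U1)) *m ctrmx U1.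
Proof.
rewrite (pinv_svd svdA) (pinv_svd svdB).
have [SSi _] := svd_cdiag_mulV svdA; have [_ StiSt] := svd_cdiag_mulV svdB.
case: svdA => /unitary_row_mx_blocks[U1U _ _ _].
move=> /unitary_row_mx_blocks[V1V _ _ _] _ _ ->.
case: svdB => /unitary_row_mx_blocks[Ut1Ut _ _ _] _ _ _ ->.
rewrite !mulmxBr !mulmxBl -!mulmxA.
by rewrite (mulmxA1 Ut1Ut) (mulmxA1 StiSt) (mulmxA1 V1V) (mulmxA1 SSi).
Qed.

Lemma frob2_pinv_sub :
  frob2 (pinv B - pinv A) =
    frob2 (Sti *m (ctrmx Ut1 *m U2)) + frob2 (ctrmx Vt2 *m V1 *m Si)
    + frob2 (pinv B *m (B - A) *m pinv A).
Proof.
case: (svdA) (svdB) => Uunit Vunit _ _ _ [Utunit Vtunit _ _ _].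
have [U1U U1U2 _ _] := unitary_row_mx_blocks Uunit.
have [Vt1Vt _ Vt2Vt1 _] := unitary_row_mx_blocks Vtunit.
have -> : frob2 (pinv B *m (B - A) *m pinv A)
          = frob2 (Sti *m (ctrmx Ut1 *m U1) - ctrmx Vt1 *m V1 *m Si).
  rewrite pinv_mul_sub_mul_pinv frob2_mulUr ?ctrmxK // frob2_mulUl //.
  by rewrite -frob2N opprB.
rewrite -(@frob2_mulUr _ _ _ _ (row_mx U1 U2)); last by case: Uunit.
rewrite -(@frob2_mulUl _ _ _ (ctrmx (row_mx Vt1 Vt2))); last first.
  by rewrite ctrmxK; case: Vtunit.
rewrite (pinv_svd svdA) (pinv_svd svdB) ctr_row_mx mul_col_mx !mul_mx_row.
rewrite frob2_col_mx !frob2_row_mx !(mulmxBr, mulmxBl) -!mulmxA.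
rewrite !(mulmxA1 Vt1Vt, mulmxA0 Vt2Vt1) U1U U1U2 !mulmx0 !mulmx1.
rewrite sub0r subr0 subrr frob2N frob20 addr0.
by rewrite -addrA addrC.
Qed.

Lemma frob2_pinv_sub_le :
  frob2 (pinv B - pinv A) <=
    specn (pinv B) ^+ 2 * frob2 (ctrmx Ut1 *m U2)
    + specn (pinv A) ^+ 2 * frob2 (ctrmx Vt2 *m V1)
    + frob2 (pinv B *m (B - A) *m pinv A).
Proof.
rewrite frob2_pinv_sub lerD2r frob2_mul_cdiag.
rewrite -[frob2 (ctrmx Vt2 *m V1)]frob2_ctrmx.
by rewrite lerD ?(frob2_svd_inv_mul_le svdA) ?(frob2_svd_inv_mul_le svdB).
Qed.

Lemma frob2_pinv_sub_ge :
  frob2 (ctrmx Ut1 *m U2) / specn B ^+ 2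
    + frob2 (ctrmx Vt2 *m V1) / specn A ^+ 2
    + frob2 (pinv B *m (B - A) *m pinv A) <= frob2 (pinv B - pinv A).
Proof.
rewrite frob2_pinv_sub lerD2r frob2_mul_cdiag.
rewrite -[frob2 (ctrmx Vt2 *m V1)]frob2_ctrmx.
by rewrite lerD ?(frob2_svd_inv_mul_ge svdA) ?(frob2_svd_inv_mul_ge svdB).
Qed.

End TwoSVD.

End PinvPerturbation.

Theorem corollary2p3 (R : realType) (m n r s : nat)
  (A B : 'M[R[i]]_(m, n))
  (U1 : 'M[R[i]]_(m, r)) (U2 : 'M[R[i]]_(m, m - r))
  (V1 : 'M[R[i]]_(n, r)) (V2 : 'M[R[i]]_(n, n - r)) (sigma : 'rV[R]_r)
  (Ut1 : 'M[R[i]]_(m, s)) (Ut2 : 'M[R[i]]_(m, m - s))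
  (Vt1 : 'M[R[i]]_(n, s)) (Vt2 : 'M[R[i]]_(n, n - s)) (sigmat : 'rV[R]_s) :
  \rank A = r -> \rank B = s ->
  svd A U1 U2 V1 V2 sigma ->
  svd B Ut1 Ut2 Vt1 Vt2 sigmat ->
  let E := B - A in
  [/\ frob (pinv B - pinv A) ^+ 2 <=
        specn (pinv B) ^+ 2 * frob (ctrmx Ut1 *m U2) ^+ 2
        + specn (pinv A) ^+ 2 * frob (ctrmx Vt2 *m V1) ^+ 2
        + frob (pinv B *m E *m pinv A) ^+ 2,
      frob (pinv B - pinv A) ^+ 2 <=
        specn (pinv A) ^+ 2 * frob (ctrmx Ut2 *m U1) ^+ 2
        + specn (pinv B) ^+ 2 * frob (ctrmx Vt1 *m V2) ^+ 2
        + frob (pinv A *m E *m pinv B) ^+ 2,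
      frob (ctrmx Ut1 *m U2) ^+ 2 / specn B ^+ 2
        + frob (ctrmx Vt2 *m V1) ^+ 2 / specn A ^+ 2
        + frob (pinv B *m E *m pinv A) ^+ 2
        <= frob (pinv B - pinv A) ^+ 2 &
      frob (ctrmx Ut2 *m U1) ^+ 2 / specn A ^+ 2
        + frob (ctrmx Vt1 *m V2) ^+ 2 / specn B ^+ 2
        + frob (pinv A *m E *m pinv B) ^+ 2
        <= frob (pinv B - pinv A) ^+ 2].
Proof.
(* The rank hypotheses are implied by the SVD data. *)
move=> _ _ svdA svdB E; rewrite {}/E.
have pinv_subC : frob2 (pinv A - pinv B) = frob2 (pinv B - pinv A).
  by rewrite -frob2N opprB.
have errC : frob2 (pinv A *m (A - B) *m pinv B)
            = frob2 (pinv A *m (B - A) *m pinv B).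
  by rewrite -(opprB B) mulmxN mulNmx frob2N.
have := frob2_pinv_sub_le svdB svdA; have := frob2_pinv_sub_ge svdB svdA.
rewrite pinv_subC errC (frob2_ctrmx_mulC U1) (frob2_ctrmx_mulC V2) => geBA leBA.
have leAB := frob2_pinv_sub_le svdA svdB.
have geAB := frob2_pinv_sub_ge svdA svdB.
rewrite -!sqr_frob in leAB geAB leBA geBA.
by split.
Qed.
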